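(* Let $K$ be a fan-like simplicial sphere of dimension $n-1$ with at most $n+3$ vertices. Then any real topological toric manifold over $K$ can be realized as the fixed point set of the conjugation of a topological toric manifold. Equivalently, for every non-singular characteristic map $\lambda:V(K)\to\mathbb{Z}_2^n$ over $\mathbb{Z}_2$ there is a non-singular characteristic map $\widetilde\lambda:V(K)\to\mathbb{Z}^n$ whose reduction modulo $2$ is $\lambda$.
   Context: A simplicial $(n-1)$-sphere $K$ is fan-like if it underlies a complete simplicial fan in $\mathbb{R}^n$. A characteristic map over $\mathbb{Z}_2$, $\lambda:V(K)\to\mathbb{Z}_2^n$, is non-singular if the vectors on every face of $K$ are linearly independent over $\mathbb{Z}_2$; a characteristic map $\widetilde\lambda:V(K)\to\mathbb{Z}^n$ is non-singular if the vectors on every face are part of a $\mathbb{Z}$-basis of $\mathbb{Z}^n$. Topological toric manifolds (as $T^n$-manifolds, with omniorientation) over $K$ correspond to complete non-singular characteristic maps over $\mathbb{Z}$ on $K$, real topological toric manifolds over $K$ correspond to non-singular characteristic maps over $\mathbb{Z}_2$ on $K$, and the fixed point set of the conjugation on the topological toric manifold of $\widetilde\lambda$ is the real topological toric manifold of the mod $2$ reduction of $\widetilde\lambda$. *)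

From HB Require Import structures.
From mathcomp Require Import all_boot all_order all_algebra.
From mathcomp Require Import Rstruct.
From Stdlib Require Import Reals.
Set Implicit Arguments. Unset Strict Implicit. Unset Printing Implicit Defensive.
Import Order.TTheory GRing.Theory Num.Theory.
Local Open Scope ring_scope.

(* A finite simplicial complex on the vertex set V: a down-closed family of
   faces containing every singleton (so the vertex set V(K) is all of V). *)
Definition simplicial_complex (V : finType) (K : {set {set V}}) : Prop :=
  (forall s t : {set V}, s \in K -> t \subset s -> t \in K) /\
  (forall v : V, [set v] \in K).

Definition lin_indep (F : fieldType) (V : finType) (n : nat)
    (S : {set V}) (x : V -> 'rV[F]_n) : Prop :=
  forall c : V -> F, \sum_(v in S) c v *: x v = 0 -> forall v, v \in S -> c v = 0.

Definition in_cone (V : finType) (n : nat) (S : {set V})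
    (x : V -> 'rV[Rdefinitions.R]_n) (p : 'rV[Rdefinitions.R]_n) : Prop :=
  exists a : V -> Rdefinitions.R,
    (forall v, v \in S -> 0 <= a v) /\ p = \sum_(v in S) a v *: x v.

(* K underlies a complete simplicial fan in R^n: there are ray generators
   w v such that each face spans a simplicial cone, the cones of two faces
   intersect in the cone of the common face, and the cones cover R^n. *)
Definition fan_like (V : finType) (K : {set {set V}}) (n : nat) : Prop :=
  exists w : V -> 'rV[Rdefinitions.R]_n,
    (forall s, s \in K -> lin_indep s w) /\
    (forall s t, s \in K -> t \in K -> forall p,
        in_cone s w p -> in_cone t w p -> in_cone (s :&: t) w p) /\
    (forall p, exists2 s, s \in K & in_cone s w p).

Definition nonsingular_F2 (V : finType) (K : {set {set V}}) (n : nat)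
    (lam : V -> 'rV['F_2]_n) : Prop :=
  forall s, s \in K -> lin_indep s lam.

(* Non-singular characteristic map over Z: the vectors on every face are
   part of a Z-basis of Z^n (rows of an invertible integer matrix). *)
Definition nonsingular_Z (V : finType) (K : {set {set V}}) (n : nat)
    (lam : V -> 'rV[int]_n) : Prop :=
  forall s, s \in K ->
    exists (M : 'M[int]_n) (f : V -> 'I_n),
      M \in unitmx /\ {in s &, injective f} /\
      (forall v, v \in s -> row (f v) M = lam v).

Definition mod2 (n : nat) (x : 'rV[int]_n) : 'rV['F_2]_n :=
  map_mx (fun z : int => z%:~R) x.

(* Completeness of the fan forces K to have a face S with n vertices: the cone
   over fewer than n rays lies in a hyperplane, and a point of the moment curve
   t |-> (1, t, ..., t^(n-1)) avoids finitely many hyperplanes.  Over F_2, lam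
   maps S to a basis, and invertible matrices over F_2 lift to GL_n(Z), so
   after a change of basis lam sends S to the standard basis and the lift of
   lam is the 0/1 lift composed with the lifted change of basis.  For a face
   T, exchanging unit vectors for the images of the at most |V| - n <= 3
   vertices of T \ S gives an invertible matrix over F_2 whose rows
   include lam(T) and whose other rows are unit vectors.  Its 0/1 lift has odd
   determinant of absolute value at most 2 (the maximum over 0/1 matrices of
   size 3), hence is unimodular. *)

From mathcomp Require Import all_boot all_order all_algebra.
From mathcomp Require Import fingroup perm zify Rstruct.
Import Order.TTheory GRing.Theory Num.Theory.
Set Implicit Arguments. Unset Strict Implicit. Unset Printing Implicit Defensive.
Local Open Scope ring_scope.

Definition zero_one_mx n (M : 'M[int]_n) := forall i j, M i j = 0 \/ M i j = 1.

Definition row_single_support n (M : 'M[int]_n) i :=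
  forall j1 j2, M i j1 != 0 -> M i j2 != 0 -> j1 = j2.

Lemma det_bool_mx_le2 n (f : nat -> nat -> bool) : (n <= 3)%N ->
  `|\det (\matrix_(i, j) (f i j)%:R : 'M[int]_n)| <= 2.
Proof.
case: n => [|[|[|[|//]]]] _.
- by rewrite det_mx00.
- by rewrite det_mx11 mxE; case: (f _ _).
- rewrite (expand_det_row _ 0) !big_ord_recl big_ord0 /cofactor !det_mx11 !mxE /bump /=.
  by case: (f 0 0); case: (f 1 1); case: (f 0 1); case: (f 1 0); vm_compute.
- rewrite (expand_det_row _ 0) !big_ord_recl big_ord0 /cofactor.
  rewrite !(expand_det_row _ 0) !big_ord_recl !big_ord0 /cofactor !det_mx11 !mxE /bump /=.
  by case: (f 0 0); case: (f 1 1); case: (f 2 2); case: (f 1 2); case: (f 2 1);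
    case: (f 0 1); case: (f 1 0); case: (f 2 0); case: (f 0 2); vm_compute.
Qed.

Lemma zero_one_mxE n (M : 'M[int]_n.+1) : zero_one_mx M ->
  M = \matrix_(i, j) (M (inord i) (inord j) == 1)%:R.
Proof.
by move=> M01; apply/matrixP => i j; rewrite mxE !inord_val; case: (M01 i j) => ->.
Qed.

Lemma det_zero_one_mx_small n (M : 'M[int]_n) :
  (n <= 3)%N -> zero_one_mx M -> `|\det M| <= 2.
Proof.
case: n M => [|n] M n_le3 M01; first by rewrite det_mx00.
rewrite (zero_one_mxE M01).
exact: (det_bool_mx_le2 (fun i j => M (inord i) (inord j) == 1)).
Qed.

Lemma det_zero_one_mx_le2 n (M : 'M[int]_n) (H : {set 'I_n}) :
  zero_one_mx M -> (#|H| <= 3)%N -> (forall i, i \notin H -> row_single_support M i) ->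
  `|\det M| <= 2.
Proof.
elim: n M H => [|n IH] M H M01 H_le3 single; first by rewrite det_mx00.
case: (pickP [pred i | i \notin H]) => [i /= iH | allH]; last first.
  apply: det_zero_one_mx_small M01; rewrite -(card_ord n.+1) -cardsT.
  suff <- : H = setT by [].
  by apply/setP => i; rewrite inE; apply/negbFE/allH.
case: (pickP [pred j | M i j != 0]) => [j /= Mij | zero_row]; last first.
  rewrite (expand_det_row _ i) big1 ?normr0 // => k _.
  by move/negbFE/eqP: (zero_row k) => ->; rewrite mul0r.
have Mij1 : M i j = 1 by case: (M01 i j) Mij => ->; rewrite ?eqxx.
rewrite (expand_det_row _ i) (bigD1 j) //= big1 ?addr0; last first.
  move=> k kj; suff -> : M i k = 0 by rewrite mul0r.
  by apply/eqP; apply: contraNT kj => /(single i iH _ _ Mij) ->.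
rewrite Mij1 mul1r /cofactor normrM normrX normrN1 expr1n mul1r.
apply: (IH _ [set k | lift i k \in H]).
- by move=> k l; rewrite !mxE.
- apply: leq_trans H_le3; rewrite -(card_imset _ (@lift_inj _ i)) subset_leq_card //.
  by apply/subsetP => x /imsetP [k]; rewrite inE => kH ->.
- move=> k; rewrite inE => kH j1 j2; rewrite !mxE => M1 M2.
  exact: lift_inj (single _ kH _ _ M1 M2).
Qed.

Lemma zero_one_mx_unitmx n (M : 'M[int]_n) (H : {set 'I_n}) :
  zero_one_mx M -> (#|H| <= 3)%N -> (forall i, i \notin H -> row_single_support M i) ->
  (\det M)%:~R != 0 :> 'F_2 -> M \in unitmx.
Proof.
move=> M01 H_le3 single; have := det_zero_one_mx_le2 M01 H_le3 single.
rewrite unitmxE; move: (\det M) => d d_le2.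
have : d = 0 \/ d = 1 \/ d = -1 \/ d = 2 \/ d = -2 by lia.
by case=> [->|[->|[->|[->|->]]]] //; rewrite ?unitrN1 ?unitr1 //; vm_compute.
Qed.

Definition lift2 (a : 'F_2) : int := (val a)%:Z.

Lemma F2_cases (a : 'F_2) : a = 0 \/ a = 1.
Proof. by case: a => [[|[|k]] Hk] //; [left|right]; apply/val_inj. Qed.

Lemma lift2K : cancel lift2 intr.
Proof. by move=> a; case: (F2_cases a) => ->. Qed.

Lemma map_lift2K m n : cancel (@map_mx _ _ lift2 m n) (map_mx intr).
Proof. by move=> M; apply/matrixP => i j; rewrite !mxE lift2K. Qed.

Lemma unitmx_F2_lift n (Q : 'M['F_2]_n) :
  Q \in unitmx -> exists2 Qt : 'M[int]_n, Qt \in unitmx & map_mx intr Qt = Q.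
Proof.
(* P Q = L U with L, U unitriangular; so are the 0/1 lifts of L and U. *)
case: n Q => [|n] Q uQ.
  by exists 1%:M; [rewrite unitmx1 | apply/matrixP => [[]]].
have := cormen_lup_correct Q; have := cormen_lup_perm Q; have := cormen_lup_detL Q.
have := @cormen_lup_lower _ _ Q; have := @cormen_lup_upper _ _ Q.
case: (cormen_lup Q) => [[P L] U] /= Uup Llow detL /is_perm_mxP [s ->] PQ_LU.
have trL : is_trig_mx (map_mx lift2 L).
  apply/is_trig_mxP => i j ij; rewrite mxE Llow ?(ltnW ij) //.
  by have /negbTE -> : i != j by apply: contraTneq ij => ->; rewrite ltnn.
have trU : is_trig_mx (map_mx lift2 U)^T.
  by apply/is_trig_mxP => i j ij; rewrite !mxE Uup.
have detU : \det U != 0.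
  move/(congr1 determinant): PQ_LU; rewrite !detM det_perm detL mul1r => <-.
  by rewrite mulf_neq0 ?signr_eq0 // -unitfE -unitmxE.
have Uii k : U k k = 1.
  case: (F2_cases (U k k)) => // Ukk0; move: detU.
  rewrite -det_tr det_trig; last by apply/is_trig_mxP => a b ab; rewrite mxE Uup.
  by rewrite (bigD1 k) //= mxE Ukk0 mul0r eqxx.
exists (perm_mx (s^-1)%g *m map_mx lift2 L *m map_mx lift2 U).
  rewrite !unitmx_mul !unitmxE det_perm unitrX ?unitrN1 //=.
  rewrite (det_trig trL) -(det_tr (map_mx lift2 U)) (det_trig trU).
  by rewrite !big1 ?unitr1 // => i _; rewrite !mxE ?Uii ?Llow ?eqxx.
rewrite !map_mxM map_perm_mx !map_lift2K -mulmxA !mulmxE -PQ_LU mulrA -mulmxE.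
by rewrite -perm_mxM mulVg perm_mx1 mul1mx.
Qed.

Definition set_row (R : Type) n (W : 'M[R]_n) i (z : 'rV_n) :=
  \matrix_(k, l) if k == i then z 0 l else W k l.

Lemma det_set_row (R : comPzRingType) n (W : 'M[R]_n) i z :
  \det (set_row W i z) = (z *m \adj W) 0 i.
Proof.
rewrite (expand_det_row _ i) !mxE; apply: eq_bigr => k _.
rewrite !mxE eqxx; congr (_ * _); rewrite /cofactor; congr (_ * \det _).
apply/matrixP => a b; have /negbTE ia : lift i a != i by rewrite eq_sym neq_lift.
by rewrite !mxE ia.
Qed.

Section Exchange.
Variables (F : fieldType) (V : finType) (n : nat) (y : V -> 'rV[F]_n).
Variables (s sg : {set V}) (gi : V -> 'I_n).
Hypothesis y_indep : lin_indep s y.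
Hypothesis gi_inj : {in sg &, injective gi}.
Hypothesis y_sg : forall v, v \in sg -> y v = delta_mx 0 (gi v).

Definition placed (L : seq V) := [set v in s | (v \in sg) || (v \in L)].

(* Steinitz exchange, after the vertices of L have replaced unit rows of W. *)
Definition exchange_inv (L : seq V) (W : 'M[F]_n) (pos : V -> 'I_n) :=
  [/\ \det W != 0,
      forall v, v \in placed L -> row (pos v) W = y v,
      {in placed L &, injective pos} &
      forall j, (forall v, v \in L -> pos v != j) -> row j W = delta_mx 0 j].

Lemma exchange_inv_nil : exchange_inv [::] 1%:M gi.
Proof.
split=> [|v|u v|j _]; rewrite ?row1 ?det1 ?oner_neq0 //.
- by rewrite inE /= orbF => /andP [_ /y_sg ->].
- by rewrite !inE /= !orbF => /andP [_ us] /andP [_ vs]; apply: gi_inj.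
Qed.

Lemma exchange_free_row (P : {set V}) W pos b :
  \det W != 0 -> P \subset s -> (forall v, v \in P -> row (pos v) W = y v) ->
  {in P &, injective pos} -> b \in s -> b \notin P ->
  exists2 j, forall v, v \in P -> pos v != j & (y b *m \adj W) 0 j != 0.
Proof.
move=> dW Ps rW pos_inj bs bP; set c := y b *m \adj W.
(* Otherwise c *m W = \det W *: y b would be a combination of the placed y v. *)
case: (pickP [pred j | [forall v in P, pos v != j] & c 0 j != 0]) => [j | no_j].
  by case/andP=> /forall_inP; exists j.
have c0 j : j \notin pos @: P -> c 0 j = 0.
  move=> jP; apply/eqP; move/negbT: (no_j j); rewrite negb_and negbK => /orP [|//].
  by case/forall_inPn => v vP /negbNE /eqP pvj; case/negP: jP; rewrite -pvj imset_f.
pose d v := if v \in P then c 0 (pos v) else if v == b then - \det W else 0.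
have cW : c *m W = \det W *: y b by rewrite /c -mulmxA mul_adj_mx mul_mx_scalar.
have cW_P : c *m W = \sum_(v in P) d v *: y v.
  rewrite mulmx_sum_row (bigID [in pos @: P]) /= [X in _ + X]big1 ?addr0; last first.
    by move=> j jP; rewrite c0 // scale0r.
  by rewrite big_imset //=; apply: eq_bigr => v vP; rewrite /d vP rW.
suff /y_indep/(_ b bs) : \sum_(v in s) d v *: y v = 0.
  by rewrite /d (negPf bP) eqxx => /eqP; rewrite oppr_eq0 (negPf dW).
rewrite (bigID [in P]) /= [X in _ + X](bigD1 b) /=; last by rewrite bs bP.
rewrite [X in _ + (_ + X)]big1 => [|v /andP [/andP [_ vP] vb]]; last first.
  by rewrite /d (negPf vP) (negPf vb) scale0r.
have -> : \sum_(v in s | v \in P) d v *: y v = \sum_(v in P) d v *: y v.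
  by apply: eq_bigl => v; rewrite andb_idl // => /(subsetP Ps).
by rewrite -cW_P cW /d (negPf bP) eqxx addr0 scaleNr subrr.
Qed.

Lemma exchange_inv_cons L W pos b :
  b \in s -> b \notin sg -> b \notin L -> exchange_inv L W pos ->
  exists W' pos', exchange_inv (b :: L) W' pos'.
Proof.
move=> bs bsg bL [dW rW pos_inj eW].
have bP : b \notin placed L by rewrite inE bs (negPf bsg) (negPf bL).
have Ps : placed L \subset s by apply/subsetP => v; rewrite inE => /andP [].
have [j jP cj] := exchange_free_row dW Ps rW pos_inj bs bP.
pose pos' v := if v == b then j else pos v.
have placed_cons v : v \in placed (b :: L) = (v == b) || (v \in placed L).
  by rewrite !inE; case: eqP => [-> | _]; rewrite ?bs ?orbT ?orbF.
exists (set_row W j (y b)), pos'; split.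
- by rewrite det_set_row.
- move=> v; rewrite placed_cons /pos'; case: eqP => [-> _ | _ vP].
    by apply/rowP => l; rewrite !mxE eqxx.
  by apply/rowP => l; rewrite !mxE (negPf (jP v vP)) -rW // mxE.
- move=> u v; rewrite !placed_cons /pos'.
  case: eqP => [-> | _] /= uP; case: eqP => [-> | _] /= vP //.
  + by move=> ej; case/eqP: (jP v vP).
  + by move=> ej; case/eqP: (jP u uP).
  + exact: pos_inj.
- move=> k k_free.
  have kj : k != j by rewrite eq_sym; have := k_free b (mem_head _ _); rewrite /pos' eqxx.
  have ek : row k W = delta_mx 0 k.
    apply: eW => v vL; have vb : v != b by apply: contraNneq bL => <-.
    by have := k_free v; rewrite inE vL orbT /pos' (negPf vb); apply.
  by apply/rowP => l; move/rowP: ek => /(_ l); rewrite !mxE (negPf kj).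
Qed.

Lemma exchange_inv_seq L : uniq L -> {subset L <= s :\: sg} ->
  exists W pos, exchange_inv L W pos.
Proof.
elim: L => [|b L IH] /= => [_ _ | /andP [bL L_uniq] Lsub].
  by exists 1%:M, gi; exact: exchange_inv_nil.
have [|W [pos inv]] := IH L_uniq; first by move=> v vL; apply: Lsub; rewrite inE vL orbT.
have /setDP [bs bsg] := Lsub b (mem_head _ _).
exact: exchange_inv_cons bs bsg bL inv.
Qed.

Lemma exchange_basis : exists W pos, [/\ \det W != 0,
  forall v, v \in s -> row (pos v) W = y v, {in s &, injective pos} &
  forall j, j \notin pos @: (s :\: sg) -> row j W = delta_mx 0 j].
Proof.
have [|W [pos [dW rW pos_inj eW]]] := exchange_inv_seq (enum_uniq (s :\: sg)).
  by move=> v; rewrite mem_enum.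
have placed_all : placed (enum (s :\: sg)) = s.
  apply/setP => v; rewrite !inE mem_enum inE.
  by case: (v \in s); case: (v \in sg).
rewrite placed_all in rW pos_inj; exists W, pos; split => // j jn.
by apply: eW => v; rewrite mem_enum => vn; apply: contraNneq jn => <-; apply: imset_f.
Qed.

End Exchange.

Lemma poly_exists_nonroot (R : numDomainType) (p : {poly R}) :
  p != 0 -> exists t, p.[t] != 0.
Proof.
move=> p0; pose ts := [seq i%:R | i <- iota 0 (size p)] : seq R.
have [[t _ pt] | no_t] := @hasP _ (fun t => p.[t] != 0) ts; first by exists t.
suff : (size ts < size p)%N by rewrite size_map size_iota ltnn.
apply: max_poly_roots p0 _ _.
  by apply/allP => t tts; apply/negPn/negP => pt; apply: no_t; exists t.
by rewrite map_inj_uniq ?iota_uniq // => i j /eqP; rewrite eqr_nat => /eqP.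
Qed.

Section MomentCurve.
Variables (V : finType) (n : nat) (w : V -> 'rV[Rdefinitions.R]_n).
Local Notation R := Rdefinitions.R.

Definition moment_curve (t : R) : 'rV[R]_n := \row_(i < n) t ^+ i.

Lemma small_face_normal (s : {set V}) : (#|s| < n)%N ->
  exists2 a : 'rV[R]_n, a != 0 & forall v, v \in s -> \sum_l a 0 l * w v 0 l = 0.
Proof.
move=> s_lt_n; pose Ws := \matrix_(i < #|s|) w (enum_val i).
have : kermx Ws^T != 0.
  rewrite -mxrank_eq0 mxrank_ker mxrank_tr -lt0n subn_gt0.
  exact: leq_ltn_trans (rank_leq_row _) s_lt_n.
case/rowV0Pn => a /sub_kermxP aW a0; exists a => // v vs.
move/rowP: aW => /(_ (enum_rank_in vs v)); rewrite !mxE => aWv; rewrite -[RHS]aWv.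
by apply: eq_bigr => l _; rewrite !mxE enum_rankK_in.
Qed.

(* The normal a of a small face yields the polynomial sum_i a_i X^i, which
   vanishes wherever the moment curve meets the cone of that face. *)
Lemma moment_curve_avoids_small_cone (s : {set V}) : (#|s| < n)%N ->
  exists2 p : {poly R}, p != 0 &
  forall t, p.[t] != 0 -> ~ in_cone s w (moment_curve t).
Proof.
move=> s_lt_n; have [a a0 a_normal] := small_face_normal s_lt_n.
pose ae (i : nat) := oapp (fun j : 'I_n => a 0 j) 0 (insub i).
have aeE (j : 'I_n) : ae j = a 0 j by rewrite /ae valK.
exists (\poly_(i < n) ae i).
  case/rV0Pn: a0 => l al; apply: contraNneq al.
  by move/(congr1 (fun p : {poly R} => p`_l)); rewrite coef_poly ltn_ord coef0 aeE => ->.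
move=> t + [c [_ tc]]; apply/negP/negPn/eqP; rewrite horner_poly.
have -> : \sum_(i < n) ae i * t ^+ i = \sum_(i < n) a 0 i * moment_curve t 0 i.
  by apply: eq_bigr => i _; rewrite mxE aeE.
rewrite tc; under eq_bigr => i _ do rewrite summxE mulr_sumr.
rewrite exchange_big /= big1 // => v vs.
under eq_bigr => i _ do rewrite mxE mulrCA.
by rewrite -mulr_sumr a_normal // mulr0.
Qed.

Lemma moment_curve_avoids_small_cones (L : seq {set V}) :
  (forall s, s \in L -> #|s| < n)%N ->
  exists2 p : {poly R}, p != 0 &
  forall t, p.[t] != 0 -> forall s, s \in L -> ~ in_cone s w (moment_curve t).
Proof.
elim: L => [|s L IH] small; first by exists 1; rewrite ?oner_neq0.
have [p p0 p_avoids] := moment_curve_avoids_small_cone (small s (mem_head _ _)).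
have [|q q0 q_avoids] := IH; first by move=> u uL; apply: small; rewrite inE uL orbT.
exists (p * q) => [|t]; first by rewrite mulf_neq0.
rewrite hornerM mulf_eq0 negb_or => /andP [pt qt] u.
by rewrite inE => /orP [/eqP -> | uL]; [apply: p_avoids | apply: q_avoids].
Qed.

Lemma complete_fan_large_face (K : {set {set V}}) :
  (forall p, exists2 s, s \in K & in_cone s w p) ->
  exists2 s, s \in K & (n <= #|s|)%N.
Proof.
move=> complete.
have [[s sK s_large] | no_large] := @hasP _ (fun s : {set V} => n <= #|s|)%N (enum K).
  by exists s; rewrite ?mem_enum in sK *.
have [|p p0 p_avoids] := @moment_curve_avoids_small_cones (enum K).
  by move=> s sK; rewrite ltnNge; apply/negP => s_large; apply: no_large; exists s.
have [t pt] := poly_exists_nonroot p0.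
have [s sK t_in_s] := complete (moment_curve t).
by case: (p_avoids t pt s); rewrite ?mem_enum.
Qed.

End MomentCurve.

Lemma lin_indep_mulmx (F : fieldType) (V : finType) n (s : {set V})
    (x : V -> 'rV[F]_n) (A : 'M_n) :
  A \in unitmx -> lin_indep s x -> lin_indep s (fun v => x v *m A).
Proof.
move=> uA x_indep c /(congr1 (mulmx^~ (invmx A))); rewrite mul0mx mulmx_suml => xA0.
apply: x_indep; rewrite -[RHS]xA0; apply: eq_bigr => v _.
by rewrite -scalemxAl mulmxK.
Qed.

Lemma frame_unitmx (F : fieldType) (V : finType) n (x : V -> 'rV[F]_n)
    (g : 'I_n -> V) (gi : V -> 'I_n) :
  cancel g gi -> lin_indep [set g i | i : 'I_n] x -> \matrix_(i < n) x (g i) \in unitmx.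
Proof.
move=> gK x_indep; rewrite -row_free_unit; apply: inj_row_free => c cX0.
have /x_indep x0 : \sum_(u in [set g i | i : 'I_n]) c 0 (gi u) *: x u = 0.
  rewrite big_imset /=; last by move=> i j _ _; apply: (can_inj gK).
  rewrite -[RHS]cX0 mulmx_sum_row; apply: eq_big => [i | i _]; first by rewrite inE.
  by rewrite gK rowK.
by apply/rowP => i; rewrite mxE -[i in LHS]gK x0 ?imset_f.
Qed.

Lemma fan_like_frame (V : finType) n (K : {set {set V}}) :
  (forall s t : {set V}, s \in K -> t \subset s -> t \in K) -> fan_like K n ->
  exists2 g : 'I_n -> V, injective g & [set g i | i : 'I_n] \in K.
Proof.
move=> down [w [_ [_ complete]]].
have [s sK s_large] := complete_fan_large_face complete.
exists (fun i => enum_val (widen_ord s_large i)).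
  by move=> i j /enum_val_inj /(congr1 val) /= ij; apply: val_inj.
by apply: down sK _; apply/subsetP => _ /imsetP [i _ ->]; apply: enum_valP.
Qed.

Lemma frame_left_inverse (V : finType) n (K : {set {set V}})
    (lam : V -> 'rV['F_2]_n) (g : 'I_n -> V) :
  (forall v, [set v] \in K) -> nonsingular_F2 K lam -> injective g ->
  exists gi : V -> 'I_n, cancel g gi.
Proof.
case: n lam g => [|n] lam g sing lam_ns g_inj.
  suff V0 : V -> False by exists (fun v => match V0 v with end) => [[]].
  move=> v; have := lam_ns _ (sing v) (fun _ => 1) (thinmx0 _) v (set11 v).
  by move/eqP; rewrite oner_eq0.
exists (fun u => odflt ord0 [pick i | g i == u]) => i.
by case: pickP => [j /eqP /g_inj | /(_ i)] //=; rewrite eqxx.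
Qed.

Lemma lift_face_unitmx (V : finType) n (y : V -> 'rV['F_2]_n)
    (g : 'I_n -> V) (gi : V -> 'I_n) (s : {set V}) :
  cancel g gi -> (forall i, y (g i) = delta_mx 0 i) -> lin_indep s y ->
  (#|V| <= n + 3)%N ->
  exists (M : 'M[int]_n) (f : V -> 'I_n), [/\ M \in unitmx, {in s &, injective f} &
    forall v, v \in s -> row (f v) M = map_mx lift2 (y v)].
Proof.
move=> gK yg y_indep cardV; set sg := [set g i | i : 'I_n].
have gi_inj : {in sg &, injective gi}.
  by move=> _ _ /imsetP [i _ ->] /imsetP [j _ ->]; rewrite !gK => ->.
have y_sg v : v \in sg -> y v = delta_mx 0 (gi v) by case/imsetP => i _ ->; rewrite gK yg.
have [W [pos [dW rW pos_inj eW]]] := exchange_basis y_indep gi_inj y_sg.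
pose M := map_mx lift2 W; pose H := pos @: (s :\: sg).
have H_le3 : (#|H| <= 3)%N.
  have card_sg : #|sg| = n by rewrite card_imset ?cardsT ?card_ord //; apply: (can_inj gK).
  have /subset_leq_card : s :\: sg \subset ~: sg by rewrite setDE subsetIr.
  rewrite /H; have := cardsC sg; have := leq_imset_card pos (s :\: sg); lia.
have M01 : zero_one_mx M.
  by move=> i j; rewrite mxE; case: (F2_cases (W i j)) => ->; [left | right].
have M_single i : i \notin H -> row_single_support M i.
  move=> /eW /rowP Wi; have Wij j : W i j = (i == j)%:R.
    by move: (Wi j); rewrite !mxE eqxx eq_sym.
  move=> j1 j2; rewrite !mxE !Wij.
  by case: (i =P j1) => [<- | _]; case: (i =P j2) => [<- | _].
exists M, pos; split=> // [|v vs]; last by rewrite -map_row rW.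
by apply: (zero_one_mx_unitmx M01 H_le3 M_single); rewrite -det_map_mx map_lift2K.
Qed.

Theorem corollary9p3 (V : finType) (n : nat) (K : {set {set V}}) :
  simplicial_complex K -> fan_like K n -> (#|V| <= n + 3)%N ->
  forall lam : V -> 'rV['F_2]_n, nonsingular_F2 K lam ->
  exists lamt : V -> 'rV[int]_n,
    nonsingular_Z K lamt /\ (forall v, mod2 (lamt v) = lam v).
Proof.
move=> [down sing] fan cardV lam lam_ns.
have [g g_inj gK_face] := fan_like_frame down fan.
have [gi gK] := frame_left_inverse sing lam_ns g_inj.
pose Q := \matrix_(i < n) lam (g i).
have uQ : Q \in unitmx by apply: frame_unitmx gK (lam_ns _ gK_face).
have [Qt uQt QtE] := unitmx_F2_lift uQ.
pose y v := lam v *m invmx Q.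
have yg i : y (g i) = delta_mx 0 i.
  by rewrite /y -(rowK (fun i => lam (g i)) i) -row_mul mulmxV // row1.
exists (fun v => map_mx lift2 (y v) *m Qt); split => [s sK | v]; last first.
  by rewrite /mod2 map_mxM map_lift2K QtE mulmxKV.
have y_indep : lin_indep s y by apply: lin_indep_mulmx (lam_ns _ sK); rewrite unitmx_inv.
have [M [f [uM f_inj Mf]]] := lift_face_unitmx gK yg y_indep cardV.
exists (M *m Qt), f; split; first by rewrite unitmx_mul uM uQt.
by split=> // v vs; rewrite row_mul Mf.
Qed.
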